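(* Let $k\ge0$ and $N\ge0$ be integers and $a,b,c,d,e,f\in\mathbb{C}$ generic. For a polynomial $Q$ with $Q(N)\ne0$, put $R(n)=Q(N-n)/Q(N)$ and $$L_Q=\sum_{n=0}^N\frac{(a)_n(1+\tfrac a2)_n(b)_n(c)_n(d)_n(e)_n(-N)_n}{n!\,(\tfrac a2)_n(1+a-b)_n(1+a-c)_n(1+a-d)_n(1+a-e)_n(1+a+N)_n}\,R(n).$$ (i) If $Q(n)=Q_k^{(2)}(n;-a-2N;d-a-N,e-a-N)$, then $$L_Q=\frac{1}{Q(N)}\,\frac{(1+a)_N(1-k+a-d-e)_N}{(1+a-d)_N(1+a-e)_N}\;{}_4F_3\!\left[\begin{matrix}1+a-b-c,\ d,\ e,\ -N\\ 1+a-b,\ 1+a-c,\ k-a+d+e-N\end{matrix}\,\Big|\,1\right].$$ (ii) If $Q(n)=Q_k^{(2)}(n;-a-2N;d-a-N,e-a-N,f-a-N)$, then $$L_Q=\frac{1}{Q(N)}\,\frac{(1+a)_N(1-k+a-d-e)_N(1-k+a-f)_N}{(1+a-d)_N(1+a-e)_N(1+a-f)_N}\;{}_5F_4\!\left[\begin{matrix}1+a-b-c,\ d,\ e,\ 1+a-f,\ -N\\ 1+a-b,\ 1+a-c,\ k-a+d+e-N,\ 1-k+a-f\end{matrix}\,\Big|\,1\right].$$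
   Context: $(c)_n$ denotes the Pochhammer symbol, $(c)_0=1$; ${}_pF_q(1)$ denotes the (terminating) generalized hypergeometric series at argument $1$. The polynomials are $Q_k^{(2)}(n;\alpha;\beta,\gamma)=\sum_{j=0}^k\frac{(-n)_j(n+\alpha)_j(-k)_j}{j!(\beta)_j(\gamma)_j}$ and $Q_k^{(2)}(n;\alpha;\beta,\gamma,\delta)=\sum_{j=0}^k\frac{(-n)_j(n+\alpha)_j(-k)_j(k-1-\alpha+\beta+\gamma+\delta)_j}{j!(\beta)_j(\gamma)_j(\delta)_j}$. Parameters are generic so that no lower parameter is a nonpositive integer (among the first $N$ Pochhammer factors) and no denominator vanishes. *)

From HB Require Import structures.
From mathcomp Require Import all_boot all_order all_algebra.
Set Implicit Arguments. Unset Strict Implicit. Unset Printing Implicit Defensive.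
Import Order.TTheory GRing.Theory Num.Theory.
Local Open Scope ring_scope.

Definition poch (R : ringType) (x : R) (n : nat) : R :=
  \prod_(i < n) (x + i%:R).

Definition Q2 (R : fieldType) (k : nat) (n al be ga : R) : R :=
  \sum_(j < k.+1)
    (poch (- n) j * poch (n + al) j * poch (- k%:R) j)
    / (j`!%:R * poch be j * poch ga j).

Definition Q3 (R : fieldType) (k : nat) (n al be ga de : R) : R :=
  \sum_(j < k.+1)
    (poch (- n) j * poch (n + al) j * poch (- k%:R) j
       * poch (k%:R - 1 - al + be + ga + de) j)
    / (j`!%:R * poch be j * poch ga j * poch de j).

(* Terminating hypergeometric series at argument 1, summed over j = 0..M.
   Used only with an upper parameter -M, so this is the full series. *)
Definition hypF (R : fieldType) (M : nat) (us ds : seq R) : R :=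
  \sum_(j < M.+1)
    (\prod_(u <- us) poch u j) / (j`!%:R * \prod_(v <- ds) poch v j).

Definition LQ (R : fieldType) (N : nat) (a b c d e : R) (Q : R -> R) : R :=
  \sum_(n < N.+1)
    (poch a n * poch (1 + a / 2%:R) n * poch b n * poch c n * poch d n
       * poch e n * poch (- N%:R) n)
    / (n`!%:R * poch (a / 2%:R) n * poch (1 + a - b) n * poch (1 + a - c) n
       * poch (1 + a - d) n * poch (1 + a - e) n * poch (1 + a + N%:R) n)
    * (Q (N%:R - n%:R) / Q N%:R).

From HB Require Import structures.
From mathcomp Require Import all_boot all_order all_algebra.
From mathcomp Require Import ring zify.
Set Implicit Arguments. Unset Strict Implicit. Unset Printing Implicit Defensive.
Import Order.TTheory GRing.Theory Num.Theory.
Local Open Scope ring_scope.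

(* Write the summand of L_Q as w(n) r_bc(n) r_de(n) R(n), where w is the
   very-well-poised weight and r_xy(n) = (x)_n (y)_n / ((1+a-x)_n (1+a-y)_n).
   The bases phi_i(n) = (-n)_i (n+a)_i and psi_j(n) = (n-N)_j (-n-a-N)_j
   ([qpoch], [dual_qpoch]) are biorthogonal for w, the off-diagonal sums being
   telescoping.  By the
   Pfaff-Saalschutz sum, r_bc expands in the phi_i and r_de psi_j in the psi_l,
   while Q(N-n) is by definition a combination of the psi_j.  Biorthogonality
   then collapses the sum over n, leaving a single sum over i whose inner sum
   over j is a Chu-Vandermonde sum for the two-parameter Q and a
   Pfaff-Saalschutz sum for the three-parameter Q; what remains is the 4F3,
   resp. 5F4. *)

(** * Pochhammer symbols *)

Section Pochhammer.
Variable R : comNzRingType.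
Implicit Types (x y : R) (m n i j : nat).

Lemma poch0 x : poch x 0 = 1.
Proof. by rewrite /poch big_ord0. Qed.

Lemma pochS x n : poch x n.+1 = poch x n * (x + n%:R).
Proof. by rewrite /poch big_ord_recr. Qed.

Lemma pochSl x n : poch x n.+1 = x * poch (x + 1) n.
Proof.
rewrite /poch big_ord_recl /= addr0; congr (_ * _); apply: eq_bigr => i _.
by rewrite /bump /= add1n -natr1; ring.
Qed.

Lemma pochD x m n : poch x (m + n) = poch x m * poch (x + m%:R) n.
Proof.
elim: n => [|n IH]; first by rewrite addn0 poch0 mulr1.
by rewrite addnS !pochS IH natrD addrA mulrA.
Qed.

Lemma poch_split x n i : (i <= n)%N -> poch x n = poch x i * poch (x + i%:R) (n - i).
Proof. by move=> le_in; rewrite -pochD subnKC. Qed.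

Lemma poch_Nnat_eq0 n j : (n < j)%N -> poch (- n%:R : R) j = 0.
Proof. by move=> lt_nj; rewrite -(subnKC lt_nj) pochD pochS addNr mulr0 mul0r. Qed.

Lemma poch_reflect x n : poch x n = (-1) ^+ n * poch (1 - x - n%:R) n.
Proof.
elim: n x => [|n IH] x; first by rewrite !poch0 expr0 mul1r.
rewrite pochS IH pochSl exprS -natr1.
have -> : 1 - x - (n%:R + 1) + 1 = 1 - x - n%:R by ring.
ring.
Qed.

Lemma poch_reflect_mul x y n :
  poch x n * poch y n = poch (1 - x - n%:R) n * poch (1 - y - n%:R) n.
Proof. by rewrite [poch x n]poch_reflect [poch y n]poch_reflect mulrACA -expr2 sqrr_sign mul1r. Qed.

Lemma poch_Nnat_fact n : poch (- n%:R : R) n = (-1) ^+ n * n`!%:R.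
Proof.
rewrite poch_reflect; congr (_ * _).
have -> : 1 - (- n%:R) - n%:R = 1 :> R by ring.
elim: n => [|n IH]; first by rewrite poch0.
by rewrite pochS IH factS natrM -natr1 mulrC addrC.
Qed.

Lemma poch_Nnat_sign M j : (j <= M)%N ->
  poch (- M%:R : R) j * (-1) ^+ j * (M - j)`!%:R = M`!%:R.
Proof.
elim: j => [|j IH] le_jM; first by rewrite poch0 expr0 subn0 !mul1r.
rewrite -IH ?(ltnW le_jM) // pochS exprS -(subnSK le_jM) factS natrM.
by rewrite (subnSK le_jM) natrB 1?ltnW //; ring.
Qed.

Lemma poch_tail y N i : (i <= N)%N ->
  poch y (N - i) * ((-1) ^+ i * poch (1 - y - N%:R) i) = poch y N.
Proof.
move=> le_iN; rewrite [poch (1 - y - N%:R) i]poch_reflect mulrA -expr2 sqrr_sign mul1r.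
rewrite -{3}(subnK le_iN) pochD; congr (_ * poch _ _).
by rewrite natrB //; ring.
Qed.

End Pochhammer.

Section PochhammerNonzero.
Variable R : idomainType.
Implicit Types (x : R).

Lemma poch_neq0_leq x m n : (m <= n)%N -> poch x n != 0 -> poch x m != 0.
Proof. by move=> le_mn; rewrite (poch_split x le_mn) mulf_eq0 negb_or => /andP[]. Qed.

Lemma poch_shift_neq0 x m n :
  (m <= n)%N -> poch x n != 0 -> poch (x + m%:R) (n - m) != 0.
Proof. by move=> le_mn; rewrite (poch_split x le_mn) mulf_eq0 negb_or => /andP[]. Qed.

End PochhammerNonzero.

Lemma natr_fact_neq0 (R : numDomainType) n : (n`!%:R : R) != 0.
Proof. by rewrite pnatr_eq0 -lt0n fact_gt0. Qed.

(** * Classical summation formulas *)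

Definition qpoch (R : comNzRingType) (a : R) (i p : nat) : R :=
  poch (- p%:R) i * poch (p%:R + a) i.

Section QuadraticPochhammer.
Variable R : comNzRingType.
Implicit Types (a : R) (i p : nat).

Lemma qpoch0 a p : qpoch a 0 p = 1.
Proof. by rewrite /qpoch !poch0 mulr1. Qed.

Lemma qpoch_eq0 a i p : (p < i)%N -> qpoch a i p = 0.
Proof. by move=> lt_pi; rewrite /qpoch poch_Nnat_eq0 // mul0r. Qed.

Lemma qpochSS a i p :
  qpoch a i.+1 p.+1 = qpoch a i.+1 p - i.+1%:R * (a + 2%:R * p%:R + 1) * qpoch (a + 1) i p.
Proof.
rewrite /qpoch pochSl [poch (- p%:R) _]pochS pochS [poch (p%:R + a) _]pochSl.
have -> : - p.+1%:R + 1 = - p%:R :> R by rewrite -natr1; ring.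
have -> : p.+1%:R + a = p%:R + (a + 1) :> R by rewrite -natr1; ring.
have -> : p%:R + a + 1 = p%:R + (a + 1) :> R by ring.
rewrite -!natr1; ring.
Qed.

Lemma qpochS a i p :
  qpoch a i p.+1 * ((i%:R - p.+1%:R) * (p%:R + a))
  = - (p.+1%:R * (p%:R + a + i%:R)) * qpoch a i p.
Proof.
have shift (x : R) : poch x i * (x + i%:R) = x * poch (x + 1) i by rewrite -pochS pochSl.
have shiftN := shift (- p.+1%:R); have shiftD := shift (p%:R + a).
rewrite (_ : - p.+1%:R + 1 = - p%:R) in shiftN; last by rewrite -natr1; ring.
rewrite (_ : p%:R + a + 1 = p.+1%:R + a) in shiftD; last by rewrite -natr1; ring.
rewrite /qpoch (_ : forall A B : R, A * B * ((i%:R - p.+1%:R) * (p%:R + a))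
   = (A * (- p.+1%:R + i%:R)) * ((p%:R + a) * B)); last by move=> A B; ring.
by rewrite shiftN -shiftD; ring.
Qed.

End QuadraticPochhammer.

Section ClassicalSums.
Variable R : numFieldType.
Implicit Types (a x : R).

(* Pfaff-Saalschutz, read as the expansion of (1+a-B)_p (1+a-D)_p in the
   basis [qpoch a _ p]. *)
Lemma saalschutz_qpoch p a (B D s : R) : s = B + D - 1 - a ->
  poch (1 + a - B) p * poch (1 + a - D) p =
  \sum_(l < p.+1) poch s l / l`!%:R * qpoch a l p * poch (B + l%:R) (p - l)
                   * poch (D + l%:R) (p - l).
Proof.
elim: p a B D s => [|p IH] a B D s Ds.
  by rewrite big_ord1 /= !poch0 qpoch0 divr1 !mulr1.
have IH0 := IH a B D s Ds.
have IH1 := IH (a + 1) (B + 1) (D + 1) (s + 1) (ltac:(rewrite Ds; ring)).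
rewrite (_ : 1 + (a + 1) - (B + 1) = 1 + a - B) in IH1; last by ring.
rewrite (_ : 1 + (a + 1) - (D + 1) = 1 + a - D) in IH1; last by ring.
rewrite big_ord_recl /= qpoch0 poch0 subn0 !addr0 fact0 divr1 !mul1r.
under eq_bigr => i _ do rewrite /bump /= add1n subSS qpochSS.
pose X (i : nat) := poch s i.+1 / i.+1`!%:R * qpoch a i.+1 p
   * poch (B + i.+1%:R) (p - i) * poch (D + i.+1%:R) (p - i).
pose Y (i : nat) := poch (s + 1) i / i`!%:R * qpoch (a + 1) i p
   * poch (B + 1 + i%:R) (p - i) * poch (D + 1 + i%:R) (p - i).
rewrite (eq_bigr (fun i : 'I_p.+1 => X i - (a + 2%:R * p%:R + 1) * s * Y i)); last first.
  move=> i _; rewrite /X /Y pochSl factS natrM.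
  rewrite -[i.+1%:R]natr1 !addrA (addrAC B) (addrAC D).
  have := natr_fact_neq0 R i; have : i%:R + 1 != 0 :> R by rewrite natr1 pnatr_eq0.
  by move=> hS hf; field; rewrite hf hS.
rewrite sumrB -mulr_sumr -IH1 big_ord_recr /= /X qpoch_eq0 // mulr0 !mul0r addr0.
rewrite big_ord_recl /= qpoch0 poch0 subn0 !addr0 fact0 divr1 !mul1r in IH0.
have sumX : \sum_(i < p) X i = (B + p%:R) * (D + p%:R) *
   (poch (1 + a - B) p * poch (1 + a - D) p - poch B p * poch D p).
  rewrite IH0 addrAC subrr add0r mulr_sumr; apply: eq_bigr => i _; rewrite /X.
  rewrite -(subnSK (ltn_ord i)) !pochS -!addrA -!natrD subnKC //; ring.
by rewrite sumX !pochS Ds; ring.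
Qed.

Section ChuVandermonde.
Variable x : R.

Let chu_term k M j :=
  poch (- k%:R) j * poch (- M%:R) j * (-1) ^+ j * poch x (M - j) / j`!%:R.

Lemma chu_termS k M i :
  chu_term k.+1 M i.+1 = chu_term k M i.+1 - M%:R * chu_term k M.-1 i.
Proof.
rewrite /chu_term.
have -> : poch (- k.+1%:R : R) i.+1 = poch (- k%:R) i.+1 - i.+1%:R * poch (- k%:R) i.
  rewrite pochSl pochS (_ : - k.+1%:R + 1 = - k%:R :> R); last by rewrite -natr1; ring.
  by rewrite -!natr1; ring.
case: M => [|M]; first by rewrite [poch (- 0%:R) i.+1]poch_Nnat_eq0 //; ring.
rewrite [poch (- M.+1%:R) i.+1]pochSl /= subSS factS natrM exprS.
rewrite (_ : - M.+1%:R + 1 = - M%:R :> R); last by rewrite -natr1; ring.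
have hf := natr_fact_neq0 R i; have hS : i%:R + 1 != 0 :> R by rewrite natr1 pnatr_eq0.
by rewrite -!natr1; field; rewrite hf hS.
Qed.

(* Chu-Vandermonde (x)_M 2F1(-k, -M; 1-x-M | 1) = (x-k)_M, using
   (x)_(M-j) (-1)^j = (x)_M / (1-x-M)_j; any range K >= k may be summed. *)
Lemma chu_vandermonde k M K : (k <= K)%N ->
  \sum_(j < K.+1) chu_term k M j = poch (x - k%:R) M.
Proof.
elim: k M K => [|k IH] M K le_kK.
  rewrite big_ord_recl big1 => [|i _]; last by rewrite /chu_term poch_Nnat_eq0 // !mul0r.
  by rewrite /chu_term !poch0 expr0 subr0 subn0 fact0 divr1 !mul1r addr0.
case: K le_kK => [//|K] le_kK.
rewrite big_ord_recl; under eq_bigr => i _ do rewrite chu_termS.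
rewrite sumrB -mulr_sumr IH //.
have sum_tail : \sum_(i < K.+1) chu_term k M i.+1 = poch (x - k%:R) M - poch x M.
  rewrite -(IH M K.+1 (leqW le_kK)) [in RHS]big_ord_recl.
  by rewrite /chu_term !poch0 expr0 subn0 fact0 divr1 !mul1r addrAC subrr add0r.
rewrite sum_tail /chu_term !poch0 expr0 subn0 fact0 divr1 !mul1r.
case: M {sum_tail} => [|M] /=; first by rewrite !poch0; ring.
rewrite [poch (x - k.+1%:R) _]pochSl [poch (x - k%:R) M.+1]pochS.
rewrite (_ : x - k.+1%:R + 1 = x - k%:R :> R); last by rewrite -natr1; ring.
by rewrite -!natr1; ring.
Qed.

End ChuVandermonde.

Section Saalschutz.
Variable x : R.

Let saal_term dl k M j :=
  qpoch (dl - x) j k * poch (- M%:R) j * (-1) ^+ j * poch x (M - j) / (j`!%:R * poch dl j).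

Lemma saal_termS dl k M i : poch dl k.+1 != 0 ->
  saal_term dl k.+1 M i.+1 =
  saal_term dl k M i.+1 - (dl - x + 2%:R * k%:R + 1) * (M%:R / dl) * saal_term (dl + 1) k M.-1 i.
Proof.
rewrite pochSl mulf_eq0 negb_or => /andP[dl_neq0 dl1_neq0]; rewrite /saal_term.
case: (ltnP k i) => [lt_ki|le_ik].
  by rewrite !qpoch_eq0 // ?mul0r ?mulr0 ?subr0 // ltnS ltnW.
rewrite qpochSS (_ : dl - x + 1 = dl + 1 - x); last by ring.
case: M => [|M]; first by rewrite [poch (- 0%:R) i.+1]poch_Nnat_eq0 //; ring.
rewrite [poch (- M.+1%:R) i.+1]pochSl /= subSS [poch dl i.+1]pochSl factS natrM exprS.
rewrite (_ : - M.+1%:R + 1 = - M%:R :> R); last by rewrite -natr1; ring.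
have hf := natr_fact_neq0 R i; have hS : i%:R + 1 != 0 :> R by rewrite natr1 pnatr_eq0.
have hdl : poch (dl + 1) i != 0 by exact: poch_neq0_leq dl1_neq0.
by rewrite -!natr1; field; rewrite hf hdl dl_neq0 hS.
Qed.

(* Pfaff-Saalschutz for the balanced (x)_M 3F2(-k, k+dl-x, -M; dl, 1-x-M | 1),
   in the same normalisation as [chu_vandermonde]. *)
Lemma saalschutz dl k M K : poch dl k != 0 -> (k <= K)%N ->
  (\sum_(j < K.+1) saal_term dl k M j) * poch (1 - dl - M%:R) M
  = poch (x - k%:R) M * poch (1 - k%:R - dl - M%:R) M.
Proof.
elim: k dl M K => [|k IH] dl M K dl_neq0 le_kK.
  rewrite big_ord_recl big1 => [|i _]; last by rewrite /saal_term qpoch_eq0 // !mul0r.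
  by rewrite /saal_term qpoch0 !poch0 ?expr0 ?subr0 ?subn0 ?fact0 ?mul1r ?divr1 ?addr0.
case: K le_kK => [//|K] le_kK.
have dl_neq0' : dl != 0 by move: dl_neq0; rewrite pochSl mulf_eq0 negb_or => /andP[].
have dl1_neq0 : poch (dl + 1) k != 0 by move: dl_neq0; rewrite pochSl mulf_eq0 negb_or => /andP[].
have dlk_neq0 : poch dl k != 0 by exact: poch_neq0_leq dl_neq0.
rewrite big_ord_recl; under eq_bigr => i _ do rewrite saal_termS //.
rewrite sumrB -mulr_sumr.
have term0 dl' k' M' : saal_term dl' k' M' 0 = poch x M'.
  by rewrite /saal_term qpoch0 !poch0 expr0 subn0 fact0 !mul1r invr1 mulr1.
have sum_tail : \sum_(i < K.+1) saal_term dl k M i.+1 =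
    \sum_(j < K.+2) saal_term dl k M j - poch x M.
  by rewrite [in RHS]big_ord_recl term0 addrAC subrr add0r.
rewrite sum_tail term0 (_ : forall u v w : R, u + (v - u - w) = v - w); last by move=> *; ring.
rewrite mulrBl (IH dl M K.+1 dlk_neq0 (leqW le_kK)).
case: M {sum_tail} => [|M] /=; first by rewrite mul0r mulr0 !mul0r subr0 !poch0.
have := IH (dl + 1) M K dl1_neq0 le_kK.
rewrite (_ : 1 - (dl + 1) - M%:R = 1 - dl - M.+1%:R); last by rewrite -natr1; ring.
rewrite (_ : 1 - k%:R - (dl + 1) - M%:R = 1 - k%:R - dl - M.+1%:R); last by rewrite -natr1; ring.
move=> IH1; rewrite [poch (1 - dl - M.+1%:R) M.+1]pochS.
rewrite (_ : forall u v w z : R, u * (v / dl) * w * (z * (1 - dl - M.+1%:R + M%:R))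
   = - (u * v) * (w * z)); last by move=> *; rewrite -natr1; field.
rewrite IH1 [poch (x - k%:R) M.+1]pochS [poch (x - k.+1%:R) M.+1]pochSl.
rewrite [poch (1 - k%:R - dl - _) M.+1]pochS [poch (1 - k.+1%:R - dl - _) M.+1]pochSl.
rewrite (_ : x - k.+1%:R + 1 = x - k%:R); last by rewrite -natr1; ring.
rewrite (_ : 1 - k.+1%:R - dl - M.+1%:R + 1 = 1 - k%:R - dl - M.+1%:R);
  last by rewrite -natr1; ring.
by rewrite -!natr1; ring.
Qed.

End Saalschutz.
End ClassicalSums.

(** * Biorthogonality for the very-well-poised weight *)

(* [dual_qpoch a N L n = qpoch (-a-2N) L (N-n)] for [n <= N]; see [saalschutz_dual]. *)
Definition dual_qpoch (R : comNzRingType) (a : R) (N L n : nat) : R :=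
  poch (n%:R - N%:R) L * poch (- n%:R - a - N%:R) L.

Definition wp_weight (R : fieldType) (a : R) (N n : nat) : R :=
  poch a n * poch (1 + a / 2%:R) n * poch (- N%:R) n
  / (n`!%:R * poch (a / 2%:R) n * poch (1 + a + N%:R) n).

Section DualBasis.
Variable R : comNzRingType.
Implicit Types (a : R).

Lemma dual_qpoch_eq0 a N L n : (n <= N)%N -> (N - n < L)%N -> dual_qpoch a N L n = 0.
Proof.
move=> le_nN ltL; rewrite /dual_qpoch (_ : n%:R - N%:R = - (N - n)%:R :> R).
  by rewrite poch_Nnat_eq0 // mul0r.
by rewrite natrB // opprB.
Qed.

Lemma dual_qpochS a N L n :
  dual_qpoch a N L n.+1 * ((n%:R - N%:R) * (n.+1%:R + a + N%:R - L%:R))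
  = dual_qpoch a N L n * ((n%:R + L%:R - N%:R) * (n.+1%:R + a + N%:R)).
Proof.
have shift (x : R) : poch x L * (x + L%:R) = x * poch (x + 1) L by rewrite -pochS pochSl.
have shift1 := shift (n%:R - N%:R); have shift2 := shift (- n.+1%:R - a - N%:R).
rewrite (_ : n%:R - N%:R + 1 = n.+1%:R - N%:R) in shift1; last by rewrite -natr1; ring.
rewrite (_ : - n.+1%:R - a - N%:R + 1 = - n%:R - a - N%:R) in shift2; last by rewrite -natr1; ring.
rewrite /dual_qpoch (_ : forall A B : R, A * B * ((n%:R - N%:R) * (n.+1%:R + a + N%:R - L%:R))
   = - (((n%:R - N%:R) * A) * (B * (- n.+1%:R - a - N%:R + L%:R)))); last first.
  by move=> A B; rewrite -natr1; ring.
by rewrite -shift1 shift2 -natr1; ring.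
Qed.

Lemma dual_qpochD a N j l n : (j <= N)%N ->
  dual_qpoch a N j n * dual_qpoch a (N - j) l n = dual_qpoch a N (j + l) n.
Proof.
move=> le_jN; rewrite /dual_qpoch !pochD natrB //.
rewrite (_ : n%:R - N%:R + j%:R = n%:R - (N%:R - j%:R) :> R); last by ring.
rewrite (_ : - n%:R - a - N%:R + j%:R = - n%:R - a - (N%:R - j%:R) :> R); last by ring.
ring.
Qed.

End DualBasis.

Lemma poch_wp_factor (R : comNzRingType) (a : R) N i : (i <= N)%N ->
  poch a i * poch (i%:R + a) i * (a + 2%:R * i%:R) * poch (1 + a + 2%:R * i%:R) (N - i)
  = a * poch (1 + a) N * poch (1 + a + N%:R) i.
Proof.
move=> le_iN; have -> : a * poch (1 + a) N * poch (1 + a + N%:R) i = poch a (N.+1 + i).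
  by rewrite pochD pochSl (addrC a 1); congr (_ * poch _ _); rewrite -natr1; ring.
rewrite (_ : (N.+1 + i = (i + i).+1 + (N - i))%N); last by lia.
rewrite pochD pochS pochD.
by congr (_ * poch _ _ * _ * poch _ _); rewrite -?natr1 ?natrD; ring.
Qed.

Section Biorthogonality.
Variables (R : numFieldType) (a : R) (N : nat).
Hypotheses (Ha2 : poch (a / 2%:R) N != 0) (HaN : poch (1 + a + N%:R) N != 0).

Lemma wp_param_neq0 : (0 < N)%N -> a != 0.
Proof.
move=> N_gt0; move: Ha2; rewrite -(prednK N_gt0) pochSl mulf_eq0 negb_or => /andP[+ _].
by apply: contraNneq => ->; rewrite mul0r.
Qed.

Let wp_base n := poch a n * poch (- N%:R) n / (a * n`!%:R * poch (1 + a + N%:R) n).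

Lemma wp_weightE n : a != 0 -> poch (a / 2%:R) n != 0 ->
  wp_weight a N n = wp_base n * (a + 2%:R * n%:R).
Proof.
move=> a_neq0 Ha2n; rewrite /wp_weight /wp_base.
have a2_neq0 : a / 2%:R != 0 by rewrite mulf_neq0 // invr_eq0 pnatr_eq0.
have -> : poch (1 + a / 2%:R) n = poch (a / 2%:R) n * (a / 2%:R + n%:R) / (a / 2%:R).
  have := pochSl (a / 2%:R) n; rewrite pochS (addrC _ 1) => ->.
  by rewrite mulrAC mulfV // mul1r.
have hf := natr_fact_neq0 R n.
rewrite !invfM; move: (poch (1 + a + N%:R) n)^-1 => q.
by field; rewrite hf a_neq0 Ha2n.
Qed.

Lemma wp_baseS n : (n < N)%N ->
  wp_base n.+1 = wp_base n * ((a + n%:R) * (n%:R - N%:R)) / (n.+1%:R * (1 + a + N%:R + n%:R)).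
Proof.
move=> lt_nN; have := poch_neq0_leq lt_nN HaN; rewrite pochS mulf_eq0 negb_or => /andP[h1 h2].
rewrite /wp_base !pochS factS natrM.
have hf := natr_fact_neq0 R n; have hS : 1 + n%:R != 0 :> R by rewrite addrC natr1 pnatr_eq0.
rewrite !invfM; move: a^-1 => q.
by field; rewrite hf h1 h2 hS.
Qed.

Lemma wp_base_eq0 : wp_base N.+1 = 0.
Proof. by rewrite /wp_base [poch (- N%:R) _]poch_Nnat_eq0 // mulr0 mul0r. Qed.

Lemma wp_biorth_lt i L : (i + L < N)%N ->
  \sum_(n < N.+1) wp_weight a N n * qpoch a i n * dual_qpoch a N L n = 0.
Proof.
move=> ltN; have a_neq0 : a != 0 by apply: wp_param_neq0; lia.
(* Gosper-type antidifference: the summand is [U n.+1 - U n]. *)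
pose U n := wp_base n * qpoch a i n * dual_qpoch a N L n
   * ((i%:R - n%:R) * (n%:R + a + N%:R - L%:R)) / (N - i - L)%:R.
have eD : ((N - i - L)%:R : R) = N%:R - i%:R - L%:R by rewrite !natrB //; lia.
have D_neq0 : ((N - i - L)%:R : R) != 0 by rewrite pnatr_eq0; lia.
rewrite -(big_mkord xpredT (fun n => wp_weight a N n * qpoch a i n * dual_qpoch a N L n)).
rewrite (@telescope_sumr_eq _ 0 N.+1 U) // => [|k /andP[_ le_kN]].
  rewrite /U wp_base_eq0 !mul0r sub0r.
  case: i ltN {U eD D_neq0} => [|i] ltN; first by rewrite subrr mul0r mulr0 mul0r oppr0.
  by rewrite qpoch_eq0 // mulr0 !mul0r oppr0.
rewrite ltnS in le_kN; rewrite wp_weightE //; last exact: poch_neq0_leq Ha2.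
case: (ltnP k N) => [lt_kN|le_Nk]; last first.
  have -> : k = N by apply/eqP; rewrite eqn_leq le_kN le_Nk.
  rewrite /U wp_base_eq0 !mul0r sub0r.
  case: L ltN eD D_neq0 {U} => [|L] ltN eD D_neq0.
    by rewrite /dual_qpoch !poch0 !mulr1 subr0 eD; field; move: D_neq0; rewrite eD subr0.
  by rewrite /dual_qpoch subrr [poch 0 _]pochSl !mul0r !mulr0 !mul0r oppr0.
have := poch_neq0_leq lt_kN HaN; rewrite pochS mulf_eq0 negb_or => /andP[_ hk].
rewrite /U wp_baseS //.
rewrite (_ : forall X Y Z W V : R, X * ((a + k%:R) * (k%:R - N%:R)) / W * Y * Z
   * ((i%:R - k.+1%:R) * (k.+1%:R + a + N%:R - L%:R)) / V
   = X / W / V * (Y * ((i%:R - k.+1%:R) * (k%:R + a)))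
     * (Z * ((k%:R - N%:R) * (k.+1%:R + a + N%:R - L%:R)))); last by move=> *; ring.
rewrite qpochS dual_qpochS eD.
have hS : 1 + k%:R != 0 :> R by rewrite addrC natr1 pnatr_eq0.
by field; rewrite -eD D_neq0 hk hS.
Qed.

Lemma wp_biorth_diag i : (i <= N)%N ->
  wp_weight a N i * qpoch a i i * dual_qpoch a N (N - i) i
  = (-1) ^+ i * poch (- N%:R) i * poch (1 + a) N * (N - i)`!%:R.
Proof.
move=> le_iN; have [N0|N_gt0] := posnP N.
  move: le_iN; rewrite N0 leqn0 => /eqP ->.
  by rewrite /wp_weight /dual_qpoch qpoch0 !poch0 fact0 !mulr1 !mul1r invr1.
have a_neq0 := wp_param_neq0 N_gt0.
rewrite wp_weightE //; last exact: poch_neq0_leq Ha2.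
rewrite /wp_base /qpoch /dual_qpoch poch_Nnat_fact.
rewrite (_ : i%:R - N%:R = - (N - i)%:R :> R); last by rewrite natrB // opprB.
rewrite poch_Nnat_fact [poch (- i%:R - a - N%:R) _]poch_reflect.
rewrite (_ : 1 - (- i%:R - a - N%:R) - (N - i)%:R = 1 + a + 2%:R * i%:R :> R); last first.
  by rewrite natrB //; ring.
set s := (-1) ^+ (N - i).
have s2 : s * s = 1 by rewrite /s -expr2 sqrr_sign.
have hP : poch (1 + a + N%:R) i != 0 by exact: poch_neq0_leq HaN.
have hf := natr_fact_neq0 R i.
rewrite (_ : forall X Y : R, poch a i * poch (- N%:R) i / (a * i`!%:R * poch (1 + a + N%:R) i)
  * (a + 2%:R * i%:R) * ((-1) ^+ i * i`!%:R * poch (i%:R + a) i) * (s * X * (s * Y))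
  = (s * s) * poch (- N%:R) i / (a * i`!%:R * poch (1 + a + N%:R) i) * ((-1) ^+ i * i`!%:R)
    * X * (poch a i * poch (i%:R + a) i * (a + 2%:R * i%:R) * Y)); last by move=> *; ring.
by rewrite poch_wp_factor // s2; field; rewrite a_neq0 hf hP.
Qed.

Lemma wp_biorth i L :
  \sum_(n < N.+1) wp_weight a N n * qpoch a i n * dual_qpoch a N L n =
  if (i + L == N)%N then (-1) ^+ i * poch (- N%:R) i * poch (1 + a) N * (N - i)`!%:R
  else 0.
Proof.
have vanish (n : 'I_N.+1) : (N <= i + L)%N -> (N < i + L)%N || (n != i :> nat) ->
    wp_weight a N n * qpoch a i n * dual_qpoch a N L n = 0.
  move=> geN /orP neq; case: (ltnP n i) => [lt_ni|le_in]; first by rewrite qpoch_eq0 // mulr0 mul0r.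
  rewrite dual_qpoch_eq0 ?mulr0 //; first by rewrite -ltnS.
  have := ltn_ord n; case: neq => [|/eqP]; lia.
case: (ltngtP (i + L) N) => [ltN|gtN|eqN]; first exact: wp_biorth_lt.
  by apply: big1 => n _; apply: vanish; rewrite ?gtN // ltnW.
have lt_iN : (i < N.+1)%N by lia.
rewrite (bigD1 (Ordinal lt_iN)) //= big1 ?addr0 => [|n neq]; last first.
  apply: vanish; rewrite ?eqN //; apply/orP; right.
  by apply: contra neq => /eqP eq_ni; apply/eqP/val_inj.
rewrite (_ : L = N - i)%N; last by lia.
by apply: wp_biorth_diag; lia.
Qed.

End Biorthogonality.

(** * Expansions of the well-poised ratios *)

Lemma poch_tail_mul (R : comNzRingType) (x y : R) N j : (j <= N)%N ->
  poch (1 - x - N%:R) j * poch (1 - y - N%:R) j * (poch x (N - j) * poch y (N - j))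
  = poch x N * poch y N.
Proof.
move=> le_jN; rewrite -(poch_tail x le_jN) -(poch_tail y le_jN).
have s2 : (-1) ^+ j * (-1) ^+ j = 1 :> R by rewrite -expr2 sqrr_sign.
rewrite [in LHS](_ : poch (1 - x - N%:R) j = (-1) ^+ j * (-1) ^+ j * poch (1 - x - N%:R) j).
  by ring.
by rewrite s2 mul1r.
Qed.

Lemma sum_ord_narrow (V : nmodType) (F : nat -> V) n m : (n <= m)%N ->
  (forall i, (n <= i < m)%N -> F i = 0) -> \sum_(i < m) F i = \sum_(i < n) F i.
Proof.
move=> le_nm F0; rewrite (big_ord_widen m F le_nm) [RHS]big_mkcond; apply: eq_bigr => i _.
by case: ifP => // /negbT; rewrite -leqNgt => le_ni; rewrite F0 // le_ni ltn_ord.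
Qed.

Definition wp_ratio (R : fieldType) (a d e : R) (n : nat) : R :=
  poch d n * poch e n / (poch (1 + a - d) n * poch (1 + a - e) n).

Section Expansions.
Variable R : numFieldType.
Implicit Types (a b c d e : R).

Lemma wp_ratio_qpoch a b c N n : (n <= N)%N ->
  poch (1 + a - b) N != 0 -> poch (1 + a - c) N != 0 ->
  wp_ratio a b c n = \sum_(i < N.+1) poch (1 + a - b - c) i
      / (i`!%:R * poch (1 + a - b) i * poch (1 + a - c) i) * qpoch a i n.
Proof.
move=> le_nN Hb Hc.
pose cf i := poch (1 + a - b - c) i / (i`!%:R * poch (1 + a - b) i * poch (1 + a - c) i).
rewrite (@sum_ord_narrow _ (fun i => cf i * qpoch a i n) n.+1) // => [|i /andP[lt_ni _]];
  last by rewrite qpoch_eq0 ?mulr0.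
have := @saalschutz_qpoch R n a (1 + a - b) (1 + a - c) (1 + a - b - c) (ltac:(ring)).
rewrite (_ : 1 + a - (1 + a - b) = b); last by ring.
rewrite (_ : 1 + a - (1 + a - c) = c); last by ring.
rewrite /wp_ratio => ->; rewrite mulr_suml; apply: eq_bigr => i _.
have le_in : (i <= n)%N by rewrite -ltnS.
have hb := poch_neq0_leq le_nN Hb; have hc := poch_neq0_leq le_nN Hc.
rewrite (poch_split _ le_in) mulf_eq0 negb_or in hb; case/andP: hb => hb1 hb2.
rewrite (poch_split _ le_in) mulf_eq0 negb_or in hc; case/andP: hc => hc1 hc2.
have hf := natr_fact_neq0 R i.
by rewrite /cf !(poch_split (1 + a - _) le_in); field; rewrite hb1 hb2 hc1 hc2 hf.
Qed.

Lemma saalschutz_dual a d e M m : (m <= M)%N ->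
  poch d m * poch e m * (poch (1 + a - d + m%:R) (M - m) * poch (1 + a - e + m%:R) (M - m))
  = \sum_(l < (M - m).+1) poch (1 + a - d - e) l / l`!%:R * poch d (M - l) * poch e (M - l)
      * dual_qpoch a M l m.
Proof.
move=> le_mM.
have := @saalschutz_qpoch R (M - m) (- a - 2%:R * M%:R) (1 - d - M%:R) (1 - e - M%:R)
  (1 + a - d - e) (ltac:(ring)).
rewrite poch_reflect_mul.
rewrite (_ : 1 - (1 + (- a - 2%:R * M%:R) - (1 - d - M%:R)) - (M - m)%:R = 1 + a - d + m%:R);
  last by rewrite natrB //; ring.
rewrite (_ : 1 - (1 + (- a - 2%:R * M%:R) - (1 - e - M%:R)) - (M - m)%:R = 1 + a - e + m%:R);
  last by rewrite natrB //; ring.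
move=> ->; rewrite mulr_sumr; apply: eq_bigr => l _.
have le_l : (l <= M - m)%N by rewrite -ltnS.
have dualE : qpoch (- a - 2%:R * M%:R) l (M - m) = dual_qpoch a M l m.
  rewrite /qpoch /dual_qpoch natrB // opprB.
  by rewrite (_ : M%:R - m%:R + (- a - 2%:R * M%:R) = - m%:R - a - M%:R); last by ring.
have := poch_reflect_mul (d + m%:R) (e + m%:R) (M - m - l).
rewrite (_ : 1 - (d + m%:R) - (M - m - l)%:R = 1 - d - M%:R + l%:R);
  last by rewrite !natrB //; ring.
rewrite (_ : 1 - (e + m%:R) - (M - m - l)%:R = 1 - e - M%:R + l%:R);
  last by rewrite !natrB //; ring.
rewrite (_ : (M - l = m + (M - m - l))%N); last by lia.
rewrite dualE !pochD => P.
by rewrite -!mulrA -P /dual_qpoch; ring.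
Qed.

End Expansions.

Section Pairing.
Variables (R : numFieldType) (a d e : R) (N : nat).
Hypotheses (Hd : poch (1 + a - d) N != 0) (He : poch (1 + a - e) N != 0).
Hypotheses (Ha2 : poch (a / 2%:R) N != 0) (HaN : poch (1 + a + N%:R) N != 0).

Lemma wp_ratio_dual j n : (j <= N)%N -> (n <= N)%N ->
  wp_ratio a d e n * dual_qpoch a N j n =
  \sum_(l < (N - j).+1) poch (1 + a - d - e) l / l`!%:R * poch d (N - j - l)
     * poch e (N - j - l) * dual_qpoch a N (j + l) n
     / (poch (1 + a - d) (N - j) * poch (1 + a - e) (N - j)).
Proof.
move=> le_jN le_nN.
pose F l := poch (1 + a - d - e) l / l`!%:R * poch d (N - j - l) * poch e (N - j - l)
  * dual_qpoch a N (j + l) n / (poch (1 + a - d) (N - j) * poch (1 + a - e) (N - j)).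
case: (leqP n (N - j)) => [le_n|lt_n]; last first.
  rewrite dual_qpoch_eq0 1?mulr0 ?big1 // => [l _|]; last by lia.
  by rewrite dual_qpoch_eq0 ?mulr0 ?mul0r //; lia.
rewrite (@sum_ord_narrow _ F (N - j - n).+1);
  [|lia|by move=> l /andP[lt_l _]; rewrite /F dual_qpoch_eq0 ?mulr0 ?mul0r //; lia].
rewrite (eq_bigr (fun l : 'I_(N - j - n).+1 => dual_qpoch a N j n
   / (poch (1 + a - d) (N - j) * poch (1 + a - e) (N - j)) *
   (poch (1 + a - d - e) l / l`!%:R * poch d (N - j - l) * poch e (N - j - l)
    * dual_qpoch a (N - j) l n))) => [|l _]; last by rewrite /F -dual_qpochD //; ring.
rewrite -mulr_sumr -saalschutz_dual //.
have le_Nj : (N - j <= N)%N := leq_subr j N.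
have hd := poch_neq0_leq le_Nj Hd; have he := poch_neq0_leq le_Nj He.
rewrite (poch_split _ le_n) mulf_eq0 negb_or in hd; case/andP: hd => hd1 hd2.
rewrite (poch_split _ le_n) mulf_eq0 negb_or in he; case/andP: he => he1 he2.
by rewrite /wp_ratio !(poch_split (1 + a - _) le_n); field; rewrite hd1 hd2 he1 he2.
Qed.

Lemma wp_pairing i j : (i <= N)%N ->
  \sum_(n < N.+1) wp_weight a N n * qpoch a i n * (wp_ratio a d e n * dual_qpoch a N j n)
  = (-1) ^+ i * poch (- N%:R) i * poch (1 + a) N * poch d i * poch e i
    * (poch (d - a - N%:R) j * poch (e - a - N%:R) j * poch (- (N - i)%:R) j * (-1) ^+ j
       * poch (1 + a - d - e) (N - i - j)) / (poch (1 + a - d) N * poch (1 + a - e) N).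
Proof.
move=> le_iN; case: (leqP j (N - i)) => [le_j|lt_j]; last first.
  rewrite [poch (- (N - i)%:R) j]poch_Nnat_eq0 // !(mulr0, mul0r).
  apply: big1 => n _; case: (ltnP n i) => [lt_ni|le_in]; first by rewrite qpoch_eq0 // mulr0 mul0r.
  by rewrite dual_qpoch_eq0 ?mulr0 //; have := ltn_ord n; lia.
have le_jN : (j <= N)%N by lia.
set D := poch (1 + a - d) (N - j) * poch (1 + a - e) (N - j).
rewrite (eq_bigr (fun n : 'I_N.+1 => \sum_(l < (N - j).+1)
   (poch (1 + a - d - e) l / l`!%:R * poch d (N - j - l) * poch e (N - j - l) / D)
    * (wp_weight a N n * qpoch a i n * dual_qpoch a N (j + l) n))) => [|n _]; last first.
  rewrite wp_ratio_dual // ?mulr_sumr; last by have := ltn_ord n; lia.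
  by apply: eq_bigr => l _; rewrite /D; ring.
rewrite exchange_big /=; under eq_bigr => l _ do rewrite -mulr_sumr wp_biorth //.
have lt_l : (N - i - j < (N - j).+1)%N by lia.
rewrite (bigD1 (Ordinal lt_l)) //= big1 ?addr0 => [|l neq_l]; last first.
  case: ifP; last by rewrite mulr0.
  by move/eqP => eqN; move: neq_l; rewrite -val_eqE /=; lia.
rewrite (_ : (i + (j + (N - i - j)) == N)%N = true); last by apply/eqP; lia.
rewrite (_ : (N - j - (N - i - j) = i)%N); last by lia.
rewrite -(poch_Nnat_sign R le_j).
have := poch_tail_mul (1 + a - d) (1 + a - e) le_jN.
rewrite (_ : 1 - (1 + a - d) - N%:R = d - a - N%:R); last by ring.
rewrite (_ : 1 - (1 + a - e) - N%:R = e - a - N%:R); last by ring.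
rewrite -/D => tailE; have := mulf_neq0 Hd He; rewrite -tailE.
rewrite !mulf_eq0 !negb_or => /andP[/andP[hd he] /andP[hD1 hD2]].
have hf := natr_fact_neq0 R (N - i - j).
by rewrite /D; field; rewrite hf hd he hD1 hD2.
Qed.

End Pairing.

Lemma LQ_weight_split (R : fieldType) (a b c d e : R) N n :
  poch a n * poch (1 + a / 2%:R) n * poch b n * poch c n * poch d n
       * poch e n * poch (- N%:R) n
    / (n`!%:R * poch (a / 2%:R) n * poch (1 + a - b) n * poch (1 + a - c) n
       * poch (1 + a - d) n * poch (1 + a - e) n * poch (1 + a + N%:R) n)
  = wp_weight a N n * wp_ratio a b c n * wp_ratio a d e n.
Proof. by rewrite /wp_weight /wp_ratio !invfM; ring. Qed.

Lemma LQ_dual_expansion (R : numFieldType) (a b c d e : R) N K (cf : nat -> R) (Q : R -> R) :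
  poch (a / 2%:R) N != 0 -> poch (1 + a + N%:R) N != 0 ->
  poch (1 + a - b) N != 0 -> poch (1 + a - c) N != 0 ->
  poch (1 + a - d) N != 0 -> poch (1 + a - e) N != 0 ->
  (forall n, (n <= N)%N -> Q (N%:R - n%:R) = \sum_(j < K) cf j * dual_qpoch a N j n) ->
  LQ N a b c d e Q =
    poch (1 + a) N / (Q N%:R * poch (1 + a - d) N * poch (1 + a - e) N) *
    \sum_(i < N.+1) (-1) ^+ i * poch (1 + a - b - c) i * poch d i * poch e i * poch (- N%:R) i
        / (i`!%:R * poch (1 + a - b) i * poch (1 + a - c) i) *
      \sum_(j < K) cf j * (poch (d - a - N%:R) j * poch (e - a - N%:R) j
        * poch (- (N - i)%:R) j * (-1) ^+ j * poch (1 + a - d - e) (N - i - j)).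
Proof.
move=> Ha2 HaN Hb Hc Hd He QE.
pose coef i := poch (1 + a - b - c) i / (i`!%:R * poch (1 + a - b) i * poch (1 + a - c) i).
rewrite /LQ (eq_bigr (fun n : 'I_N.+1 => (Q N%:R)^-1 * \sum_(i < N.+1) \sum_(j < K)
   coef i * cf j * (wp_weight a N n * qpoch a i n * (wp_ratio a d e n * dual_qpoch a N j n))));
  last first.
  move=> n _; have le_nN : (n <= N)%N by rewrite -ltnS.
  rewrite QE // LQ_weight_split.
  rewrite (wp_ratio_qpoch le_nN Hb Hc) !mulr_sumr !mulr_suml; apply: eq_bigr => i _.
  by rewrite !mulr_sumr; apply: eq_bigr => j _; rewrite /coef; ring.
rewrite -mulr_sumr exchange_big /=; under eq_bigr => i _ do rewrite exchange_big /=.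
rewrite mulr_sumr [RHS]mulr_sumr; apply: eq_bigr => i _.
rewrite mulr_sumr [RHS]mulrA [RHS]mulr_sumr; apply: eq_bigr => j _.
by rewrite -mulr_sumr (wp_pairing Hd He Ha2 HaN) -1?ltnS // /coef !invfM; ring.
Qed.

Section CaseQ2.
Variables (R : numFieldType) (k N : nat) (a b c d e : R).
Hypotheses (Ha2 : poch (a / 2%:R) N != 0) (HaN : poch (1 + a + N%:R) N != 0).
Hypotheses (Hb : poch (1 + a - b) N != 0) (Hc : poch (1 + a - c) N != 0).
Hypotheses (Hd : poch (1 + a - d) N != 0) (He : poch (1 + a - e) N != 0).
Hypotheses (Hbe : poch (d - a - N%:R) k != 0) (Hga : poch (e - a - N%:R) k != 0).
Hypothesis (Hde : poch (k%:R - a + d + e - N%:R) N != 0).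

Let cf j := poch (- k%:R) j / (j`!%:R * poch (d - a - N%:R) j * poch (e - a - N%:R) j).

Lemma Q2_dual n :
  Q2 k (N%:R - n%:R) (- a - 2%:R * N%:R) (d - a - N%:R) (e - a - N%:R) =
  \sum_(j < k.+1) cf j * dual_qpoch a N j n.
Proof.
apply: eq_bigr => j _; rewrite /dual_qpoch.
rewrite (_ : - (N%:R - n%:R) = n%:R - N%:R :> R); last by ring.
rewrite (_ : N%:R - n%:R + (- a - 2%:R * N%:R) = - n%:R - a - N%:R :> R); last by ring.
by rewrite /cf; ring.
Qed.

Lemma Q2_coef_sum i :
  \sum_(j < k.+1) cf j * (poch (d - a - N%:R) j * poch (e - a - N%:R) j
      * poch (- (N - i)%:R) j * (-1) ^+ j * poch (1 + a - d - e) (N - i - j))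
  = poch (1 - k%:R + a - d - e) (N - i).
Proof.
rewrite (_ : 1 - k%:R + a - d - e = 1 + a - d - e - k%:R); last by ring.
rewrite -(chu_vandermonde _ (N - i) (leqnn k)); apply: eq_bigr => j _.
have le_jk : (j <= k)%N by rewrite -ltnS.
have hd := poch_neq0_leq le_jk Hbe; have he := poch_neq0_leq le_jk Hga.
by have hf := natr_fact_neq0 R j; rewrite /cf; field; rewrite hf hd he.
Qed.

Lemma LQ_Q2 (Q := fun n => Q2 k n (- a - 2%:R * N%:R) (d - a - N%:R) (e - a - N%:R)) :
  Q N%:R != 0 ->
  LQ N a b c d e Q =
    1 / Q N%:R
    * (poch (1 + a) N * poch (1 - k%:R + a - d - e) N)
      / (poch (1 + a - d) N * poch (1 + a - e) N)
    * hypF N [:: 1 + a - b - c; d; e; - N%:R]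
             [:: 1 + a - b; 1 + a - c; k%:R - a + d + e - N%:R].
Proof.
move=> HQ; rewrite (LQ_dual_expansion (cf := cf) (Q := Q) Ha2 HaN Hb Hc Hd He
  (fun n _ => Q2_dual n)).
under eq_bigr => i _ do rewrite Q2_coef_sum.
rewrite /hypF !mulr_sumr; apply: eq_bigr => i _; rewrite !big_cons !big_nil.
have le_iN : (i <= N)%N by rewrite -ltnS.
have := poch_tail (1 - k%:R + a - d - e) le_iN.
rewrite (_ : 1 - (1 - k%:R + a - d - e) - N%:R = k%:R - a + d + e - N%:R); last by ring.
move=> <-; have hf := natr_fact_neq0 R i.
have hb := poch_neq0_leq le_iN Hb; have hc := poch_neq0_leq le_iN Hc.
have hde := poch_neq0_leq le_iN Hde.
by field; rewrite HQ Hd He hf hb hc hde.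
Qed.

End CaseQ2.

Section CaseQ3.
Variables (R : numFieldType) (k N : nat) (a b c d e f : R).
Hypotheses (Ha2 : poch (a / 2%:R) N != 0) (HaN : poch (1 + a + N%:R) N != 0).
Hypotheses (Hb : poch (1 + a - b) N != 0) (Hc : poch (1 + a - c) N != 0).
Hypotheses (Hd : poch (1 + a - d) N != 0) (He : poch (1 + a - e) N != 0).
Hypotheses (Hbe : poch (d - a - N%:R) k != 0) (Hga : poch (e - a - N%:R) k != 0).
Hypothesis (Hde : poch (k%:R - a + d + e - N%:R) N != 0).
Hypotheses (Hdl : poch (f - a - N%:R) k != 0) (Hf : poch (1 + a - f) N != 0).
Hypothesis (Hkf : poch (1 - k%:R + a - f) N != 0).

Let dl := f - a - N%:R.
Let x := 1 + a - d - e.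
Let cf j := poch (- k%:R) j * poch (k%:R + (dl - x)) j
  / (j`!%:R * poch (d - a - N%:R) j * poch (e - a - N%:R) j * poch dl j).

Lemma Q3_dual n :
  Q3 k (N%:R - n%:R) (- a - 2%:R * N%:R) (d - a - N%:R) (e - a - N%:R) dl =
  \sum_(j < k.+1) cf j * dual_qpoch a N j n.
Proof.
apply: eq_bigr => j _; rewrite /dual_qpoch.
rewrite (_ : - (N%:R - n%:R) = n%:R - N%:R :> R); last by ring.
rewrite (_ : N%:R - n%:R + (- a - 2%:R * N%:R) = - n%:R - a - N%:R :> R); last by ring.
rewrite (_ : k%:R - 1 - (- a - 2%:R * N%:R) + (d - a - N%:R) + (e - a - N%:R) + dl
   = k%:R + (dl - x)); last by rewrite /x /dl; ring.
by rewrite /cf; ring.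
Qed.

Lemma Q3_coef_sum i : (i <= N)%N ->
  \sum_(j < k.+1) cf j * (poch (d - a - N%:R) j * poch (e - a - N%:R) j
      * poch (- (N - i)%:R) j * (-1) ^+ j * poch (1 + a - d - e) (N - i - j))
  = poch (1 - k%:R + a - d - e) (N - i) * poch (1 - k%:R + a - f + i%:R) (N - i)
      / poch (1 + a - f + i%:R) (N - i).
Proof.
move=> le_iN; have hfi : poch (1 + a - f + i%:R) (N - i) != 0 by exact: poch_shift_neq0.
have := saalschutz x (N - i) Hdl (leqnn k).
rewrite (_ : 1 - dl - (N - i)%:R = 1 + a - f + i%:R); last by rewrite /dl natrB //; ring.
rewrite (_ : 1 - k%:R - dl - (N - i)%:R = 1 - k%:R + a - f + i%:R); last first.
  by rewrite /dl natrB //; ring.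
rewrite (_ : x - k%:R = 1 - k%:R + a - d - e); last by rewrite /x; ring.
move=> saal; apply: (canRL (mulfK hfi)); rewrite -saal; congr (_ * _).
apply: eq_bigr => j _; have le_jk : (j <= k)%N by rewrite -ltnS.
have hd := poch_neq0_leq le_jk Hbe; have he := poch_neq0_leq le_jk Hga.
have hdl := poch_neq0_leq le_jk Hdl; have hf := natr_fact_neq0 R j.
by rewrite /cf /qpoch; field; rewrite hf hd he hdl.
Qed.

Lemma LQ_Q3 (Q := fun n => Q3 k n (- a - 2%:R * N%:R) (d - a - N%:R) (e - a - N%:R) dl) :
  Q N%:R != 0 ->
  LQ N a b c d e Q =
    1 / Q N%:R
    * (poch (1 + a) N * poch (1 - k%:R + a - d - e) N * poch (1 - k%:R + a - f) N)
      / (poch (1 + a - d) N * poch (1 + a - e) N * poch (1 + a - f) N)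
    * hypF N [:: 1 + a - b - c; d; e; 1 + a - f; - N%:R]
             [:: 1 + a - b; 1 + a - c; k%:R - a + d + e - N%:R; 1 - k%:R + a - f].
Proof.
move=> HQ; rewrite (LQ_dual_expansion (cf := cf) (Q := Q) Ha2 HaN Hb Hc Hd He
  (fun n _ => Q3_dual n)).
rewrite /hypF !mulr_sumr; apply: eq_bigr => i _; rewrite !big_cons !big_nil.
have le_iN : (i <= N)%N by rewrite -ltnS.
rewrite Q3_coef_sum //; have := poch_tail (1 - k%:R + a - d - e) le_iN.
rewrite (_ : 1 - (1 - k%:R + a - d - e) - N%:R = k%:R - a + d + e - N%:R); last by ring.
move=> <-; rewrite (poch_split (1 + a - f) le_iN) (poch_split (1 - k%:R + a - f) le_iN).
have hf := natr_fact_neq0 R i.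
have hb := poch_neq0_leq le_iN Hb; have hc := poch_neq0_leq le_iN Hc.
have hde := poch_neq0_leq le_iN Hde; have hfi := poch_shift_neq0 le_iN Hf.
have hf1 := poch_neq0_leq le_iN Hf; have hkf := poch_neq0_leq le_iN Hkf.
by field; rewrite HQ Hd He hf hb hc hde hfi hf1 hkf.
Qed.

End CaseQ3.

Theorem theorem10 (C : numClosedFieldType) (k N : nat) (a b c d e : C)
  (Ha2 : poch (a / 2%:R) N != 0)
  (Hb : poch (1 + a - b) N != 0) (Hc : poch (1 + a - c) N != 0)
  (Hd : poch (1 + a - d) N != 0) (He : poch (1 + a - e) N != 0)
  (HaN : poch (1 + a + N%:R) N != 0)
  (Hbe : poch (d - a - N%:R) k != 0) (Hga : poch (e - a - N%:R) k != 0)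
  (Hde : poch (k%:R - a + d + e - N%:R) N != 0) :
  (let Q := fun n => Q2 k n (- a - 2%:R * N%:R) (d - a - N%:R) (e - a - N%:R) in
   Q N%:R != 0 ->
   LQ N a b c d e Q =
     1 / Q N%:R
     * (poch (1 + a) N * poch (1 - k%:R + a - d - e) N)
       / (poch (1 + a - d) N * poch (1 + a - e) N)
     * hypF N [:: 1 + a - b - c; d; e; - N%:R]
              [:: 1 + a - b; 1 + a - c; k%:R - a + d + e - N%:R])
  /\
  (forall f : C,
   poch (f - a - N%:R) k != 0 ->
   poch (1 + a - f) N != 0 ->
   poch (1 - k%:R + a - f) N != 0 ->
   let Q := fun n => Q3 k n (- a - 2%:R * N%:R) (d - a - N%:R) (e - a - N%:R)
                        (f - a - N%:R) in
   Q N%:R != 0 ->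
   LQ N a b c d e Q =
     1 / Q N%:R
     * (poch (1 + a) N * poch (1 - k%:R + a - d - e) N * poch (1 - k%:R + a - f) N)
       / (poch (1 + a - d) N * poch (1 + a - e) N * poch (1 + a - f) N)
     * hypF N [:: 1 + a - b - c; d; e; 1 + a - f; - N%:R]
              [:: 1 + a - b; 1 + a - c; k%:R - a + d + e - N%:R; 1 - k%:R + a - f]).
Proof.
by split=> [|f Hdl Hf Hkf]; [exact: LQ_Q2 | exact: LQ_Q3].
Qed.
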